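(* Let $n\ge1$ and let $x_1,\dots,x_n$ and $y_1,\dots,y_n$ be Boolean values. Define Boolean values $a_1,\dots,a_{n-1}$ and $d_1,\dots,d_n$ inductively by $a_1\Leftrightarrow(x_1\ge y_1)$; $a_{i+1}\Leftrightarrow(a_i\wedge x_{i+1}\ge y_{i+1})$ for $1\le i\le n-2$; $d_1\Leftrightarrow(y_1\ge x_1)$; $d_{i+1}\Leftrightarrow(d_i\wedge(\bar a_i\vee y_{i+1}\ge x_{i+1}))$ for $1\le i\le n-1$. Then $d_n$ holds if and only if $(x_1,\dots,x_n)\le_{\mathrm{lex}}(y_1,\dots,y_n)$.
   Context: Boolean values are $0$ (false) and $1$ (true), with $0<1$; $\bar a=1-a$. The lexicographic order on $\{0,1\}^n$: $(x_1,\dots,x_n)\le_{\mathrm{lex}}(y_1,\dots,y_n)$ iff the tuples are equal or, at the first index $i$ where they differ, $x_i<y_i$ (equivalently $\sum_{i=1}^n 2^{n-i}x_i\le\sum_{i=1}^n 2^{n-i}y_i$). *)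

From mathcomp Require Import all_boot.
Set Implicit Arguments. Unset Strict Implicit. Unset Printing Implicit Defensive.

(* Boolean tuples (x_1,...,x_n) are modelled as functions x : nat -> bool,
   of which only the values at indices 1..n are relevant.
   Booleans are compared via the coercion bool >-> nat (false=0 < true=1). *)

(* a_1 = (x_1 >= y_1); a_{i+1} = a_i /\ (x_{i+1} >= y_{i+1}).
   (a 0 is an unused dummy value.) *)
Fixpoint aseq (x y : nat -> bool) (i : nat) : bool :=
  match i with
  | 0 => true
  | 1 => (y 1 <= x 1)%N
  | i'.+1 => aseq x y i' && (y i'.+1 <= x i'.+1)%N
  end.

Fixpoint dseq (x y : nat -> bool) (i : nat) : bool :=
  match i with
  | 0 => true
  | 1 => (x 1 <= y 1)%N
  | i'.+1 => dseq x y i' && (~~ aseq x y i' || (x i'.+1 <= y i'.+1)%N)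
  end.

Definition lex_le (n : nat) (x y : nat -> bool) : Prop :=
  (forall i, 1 <= i <= n -> x i = y i) \/
  (exists i, [/\ 1 <= i <= n,
                 (forall j, 1 <= j < i -> x j = y j) &
                 (x i < y i)%N]).

From mathcomp Require Import all_boot zify.

(* a_i says that x dominates y componentwise on the first i indices. Under
   x <=lex y on that prefix, this means the prefixes coincide, so
   d_{i+1} = d_i /\ (prefixes differ \/ x_{i+1} <= y_{i+1}), which is exactly
   how x <=lex y extends from i to i+1 indices. With the dummy values
   a_0 = d_0 = true the recursions are uniform in i. *)

Definition agree_upto (n : nat) (x y : nat -> bool) : Prop :=
  forall i, 1 <= i <= n -> x i = y i.

Lemma index_rangeS (n i : nat) :
  (1 <= i <= n.+1) = (i == n.+1) || (1 <= i <= n).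
Proof. by apply/idP/idP; lia. Qed.

Section LexRecursion.

Variables x y : nat -> bool.

Lemma aseqS (n : nat) : aseq x y n.+1 = aseq x y n && (y n.+1 <= x n.+1).
Proof. by case: n. Qed.

Lemma dseqS (n : nat) :
  dseq x y n.+1 = dseq x y n && (~~ aseq x y n || (x n.+1 <= y n.+1)).
Proof. by case: n. Qed.

Lemma aseqP (n : nat) :
  aseq x y n <-> forall j, 1 <= j <= n -> y j <= x j.
Proof.
elim: n => [|n IH]; first by split=> // _ j; lia.
rewrite aseqS; split.
- case/andP=> /IH ge_n ge_Sn j; rewrite index_rangeS.
  by case/orP=> [/eqP -> //|]; apply: ge_n.
- move=> ge_Sn; apply/andP; split; last by apply: ge_Sn; rewrite index_rangeS eqxx.
  by apply/IH=> j jn; apply: ge_Sn; rewrite index_rangeS jn orbT.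
Qed.

Lemma agree_uptoS (n : nat) :
  agree_upto n.+1 x y <-> agree_upto n x y /\ x n.+1 = y n.+1.
Proof.
split=> [eq_Sn | [eq_n eq_last] i].
- by split=> [i ni|]; apply: eq_Sn; rewrite index_rangeS ?ni ?orbT ?eqxx.
- by rewrite index_rangeS => /orP[/eqP -> //|]; apply: eq_n.
Qed.

Lemma lex_leS (n : nat) :
  lex_le n.+1 x y <->
  lex_le n x y /\ (~ agree_upto n x y \/ x n.+1 <= y n.+1).
Proof.
split.
- case=> [/agree_uptoS [eq_n ->]|[i [iSn eq_below lt_i]]].
  + by split; [left | right].
  move: iSn; rewrite index_rangeS => /orP[/eqP def_i|i_n].
  + subst i; split; last by right; apply: ltnW.
    by left=> j jn; apply: eq_below; lia.
  split; first by right; exists i.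
  by left=> eq_n; move: lt_i; rewrite eq_n ?ltnn.
- case=> [[eq_n|[i [i_n eq_below lt_i]]] [neq_n|le_last]] //.
  + have [eq_last|ne_last] := eqVneq (x n.+1) (y n.+1).
      by left; apply/agree_uptoS.
    right; exists n.+1; split; first by rewrite index_rangeS eqxx.
    * by move=> j jn; apply: eq_n; lia.
    * by move: ne_last le_last; case: (x n.+1); case: (y n.+1).
  + by right; exists i; split=> //; lia.
  + by right; exists i; split=> //; lia.
Qed.

Lemma lex_le_dominated_agree (n : nat) :
  lex_le n x y -> (forall j, 1 <= j <= n -> y j <= x j) -> agree_upto n x y.
Proof.
case=> [//|[i [i_n _ lt_i]]] ge_n.
by have := ge_n i i_n; move: lt_i; case: (x i); case: (y i).
Qed.

Lemma aseq_agree (n : nat) :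
  lex_le n x y -> aseq x y n <-> agree_upto n x y.
Proof.
move=> lex_n; rewrite aseqP; split; first exact: lex_le_dominated_agree.
by move=> eq_n j jn; rewrite eq_n.
Qed.

Lemma dseq_lex_le (n : nat) : dseq x y n <-> lex_le n x y.
Proof.
elim: n => [|n IH]; first by split=> // _; left=> i; lia.
rewrite dseqS lex_leS; split.
- case/andP=> /IH lex_n /orP[/negP not_a|le_last]; split=> //; last by right.
  by left=> eq_n; apply/not_a/aseq_agree.
- case=> lex_n [neq_n|le_last]; apply/andP; split; try exact/IH.
  + by apply/orP; left; apply/negP=> /(aseq_agree _ lex_n).
  + by rewrite le_last orbT.
Qed.

End LexRecursion.

Theorem lemma11 (n : nat) (x y : nat -> bool) :
  1 <= n -> (dseq x y n <-> lex_le n x y).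
Proof. by move=> _; apply: dseq_lex_le. Qed.
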